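(* Let $0\le\beta_1\le\dots\le\beta_n$ be reals and $\ell\in\{1,\dots,n\}$. Then: 1. For each integer $d\ge0$ there is an $(\ell,\frac{2d}{\ell})$-set $I$ with $|I|=2d$. 2. For each integer $h$ with $0\le h\le\frac{\ell+1}{2}$ there is an $(\ell,1-\frac{2h}{\ell(\ell+1)})$-set $I$ with $\ell-1\le|I|\le\ell$. 3. For each integer $k\ge1$ and each $h\in\{0,1,\dots,\ell\}$ there is an $(\ell,k+\frac{2h}{\ell(\ell+1)})$-set $I$ with $k\ell+\lfloor\frac{2h}{\ell+1}\rfloor\le|I|\le k\ell+\lceil\frac{2h}{\ell+1}\rceil$. 4. For each integer $d\ge1$ and each $h\in\{0,1,\dots,\ell\}$ there is an $(\ell,\frac{2d}{\ell}+\frac{2h}{\ell(\ell+1)})$-set $I$ with $|I|\le 2d+2$. 5. If $\ell\le n-1$, then for each integer $d\ge0$ there is an $\ell$-set $I$ with $|I|=2d$, $\Sigma(I)\ge\ell d$, and $\sigma(I,\ell)\le\frac{2d\,t_{\ell+1}}{\ell+1}$.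
   Context: Set $\beta_0=0$. For $\ell=1,\dots,n$, let $t_\ell=\sum_{i=1}^{\ell}\beta_{n-\ell+i}$, the sum of the $\ell$ largest $\beta_i$. An $\ell$-set is a finite multiset of elements of $\{0,1,\dots,\ell\}$. For a multiset $I$, $|I|$ is its cardinality and $\Sigma(I)$ the sum of its elements, both counting multiplicity. For an $\ell$-set $I$, $\sigma(I,\ell)=\sum_{i\in I}\beta_{n-\ell+i}$, counting multiplicity. For a real $q>0$, an $(\ell,q)$-set is an $\ell$-set $I$ with $\Sigma(I)\ge\frac{q\ell(\ell+1)}2$ and $\sigma(I,\ell)\le q\,t_\ell$. *)

From HB Require Import structures.
From mathcomp Require Import all_boot all_order all_algebra.
Set Implicit Arguments. Unset Strict Implicit. Unset Printing Implicit Defensive.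
Import Order.TTheory GRing.Theory Num.Theory.
Local Open Scope ring_scope.

(* beta : nat -> R gives beta_1, ..., beta_n (values at other indices are
   ignored); the convention beta_0 = 0 is built into [betaz]. *)
Definition betaz (R : realFieldType) (beta : nat -> R) (i : nat) : R :=
  if i == 0%N then 0 else beta i.

Definition tsum (R : realFieldType) (beta : nat -> R) (n l : nat) : R :=
  \sum_(1 <= i < l.+1) betaz beta (n - l + i)%N.

(* an l-set: a finite multiset of elements of {0,...,l}, represented by a
   sequence (order irrelevant, multiplicities counted) *)
Definition lset (l : nat) (I : seq nat) : bool := all (fun i => i <= l)%N I.

(* Sigma(I) = sumn I ; |I| = size I *)
Definition sigmaI (R : realFieldType) (beta : nat -> R) (n l : nat)
  (I : seq nat) : R := \sum_(i <- I) betaz beta (n - l + i)%N.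

Definition lqset (R : realFieldType) (beta : nat -> R) (n l : nat) (q : R)
  (I : seq nat) : Prop :=
  [/\ lset l I,
      q * (l * (l + 1))%:R / 2 <= (sumn I)%:R
    & sigmaI beta n l I <= q * tsum beta n l].

From HB Require Import structures.
From mathcomp Require Import all_boot all_order all_algebra.
From mathcomp.zify Require Import zify.
From mathcomp.algebra_tactics Require Import ring lra.
Import Order.TTheory GRing.Theory Num.Theory.
Local Open Scope ring_scope.

(* Sets with exactly prescribed element sum are found by averaging.  If a
   nonnegatively weighted family of l-sets covers every i in {1..l} with the
   same total weight, then the weighted mean of
   l(l+1) sigma(I,l) - 2 Sigma(I) t_l vanishes, so some member with positive
   weight is an (l, 2 Sigma(I) / (l(l+1)))-set.  The pairs {i, l+a-i} and
   triples {x} u {i, l+a-i}, suitably weighted, form such a family of sets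
   with sum l+1+h (for 2h <= l+1); its mirror image under i |-> l+1-i, with
   each pair completed by a pair of sum l+1, gives sets with sum 2(l+1)-h.
   Concatenating copies of these sets and of {1..l} realises every q of the
   statement, and a pair for l+1 shifted down by one gives the last part. *)

Section SharpSets.
Set Implicit Arguments. Unset Strict Implicit.

Variable R : realFieldType.
Implicit Types (c g : nat -> R) (l h a m M d : nat) (I J : seq nat).

Definition psum c m : R := \sum_(1 <= i < m.+1) c i.

Lemma psum_affine c (u v : R) m : (forall x, c x = u + v * x%:R) ->
  psum c m = m%:R * u + v * (m%:R * (m%:R + 1) / 2).
Proof.
rewrite /psum => cE; elim: m => [|m IH]; first by rewrite big_geq //; ring.
by rewrite big_nat_recr //= IH cE -[m.+1]addn1 natrD; field.
Qed.

Lemma psum_rev c l : psum (fun i => c (l.+1 - i)%N) l = psum c l.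
Proof.
rewrite /psum big_nat_rev /=; apply: eq_big_nat => i /andP[i1 il]; congr (c _); lia.
Qed.

Lemma psum_convC g c h :
  \sum_(1 <= x < h.+1) g x * psum c (h - x) = \sum_(1 <= x < h.+1) c x * psum g (h - x).
Proof.
have recr g' c' k : \sum_(1 <= x < k.+2) g' x * psum c' (k.+1 - x) =
    \sum_(1 <= x < k.+1) g' x * psum c' (k - x) + \sum_(1 <= x < k.+1) g' x * c' (k.+1 - x)%N.
  rewrite big_nat_recr //= subnn /psum [X in _ * X]big_geq // mulr0 addr0 -big_split /=.
  apply: eq_big_nat => x /andP[x1 xk]; rewrite subSn; last by lia.
  by rewrite big_nat_recr //= mulrDr.
elim: h => [|h IH]; first by rewrite !big_geq.
rewrite !recr IH; congr (_ + _).
rewrite big_nat_rev /=; apply: eq_big_nat => x /andP[x1 xh].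
by rewrite mulrC; congr (c _ * g _); lia.
Qed.

Definition pair_block l a : seq (seq nat) :=
  [seq [:: i; (l + a - i)%N] | i <- index_iota a l.+1].

Lemma sum_pair_block c l a : (1 <= a <= l.+1)%N ->
  \sum_(J <- pair_block l a) \sum_(i <- J) c i = 2 * (psum c l - psum c a.-1).
Proof.
move=> /andP[a1 al]; rewrite big_map.
under eq_bigr => i _ do rewrite !big_cons big_nil addr0.
rewrite big_split /=.
have -> : \sum_(a <= i < l.+1) c (l + a - i)%N = \sum_(a <= i < l.+1) c i.
  by rewrite big_nat_rev /=; apply: eq_big_nat => i /andP[ia il]; congr (c _); lia.
rewrite /psum (big_cat_nat _ (m := 1) (n := a)) //= prednK //; ring.
Qed.

Definition triple_weight l h x : R := 2 * ((l.+1 + h)%:R - 3 * x%:R).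
Definition pair_weight l h : R := l%:R * (l%:R + 1 - 2 * h%:R).

(* Every set of [low_family l h] has sum [l+1+h], and the weights are exactly
   those making the family [balanced]. *)
Definition low_family l h : seq (R * seq nat) :=
  flatten [seq [seq (triple_weight l h x, x :: J) | J <- pair_block l (h.+1 - x)]
          | x <- index_iota 1 h.+1]
  ++ [seq (pair_weight l h, J) | J <- pair_block l h.+1].

(* Each [i] in [1..l] occurs in the sets of [s] with total weight [K], and no
   other index occurs. *)
Definition balanced l (K : R) (s : seq (R * seq nat)) :=
  forall c, \sum_(t <- s) t.1 * \sum_(i <- t.2) c i = K * psum c l.

Lemma triple_weightE l h x : triple_weight l h x = 2 * (l.+1 + h)%:R + (-6) * x%:R.
Proof. by rewrite /triple_weight; ring. Qed.

Lemma triple_weight_mulE l h x : (1 <= x <= h)%N -> (h <= l)%N ->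
  triple_weight l h x * (l - h + x)%:R =
  2 * psum (triple_weight l h) (h - x) + 2 * pair_weight l h.
Proof.
move=> /andP[x1 xh] hl; rewrite (psum_affine _ (triple_weightE l h)) /triple_weight /pair_weight.
rewrite !natrD (natrB R hl) (natrB R xh) -!natr1; by field.
Qed.

Lemma psum_triple_weight l h : (h <= l)%N ->
  psum (triple_weight l h) h + pair_weight l h = (l.+1 + h)%:R * (l - h)%:R.
Proof.
move=> hl; rewrite (psum_affine _ (triple_weightE l h)) /pair_weight.
by rewrite (natrB R hl) -!natr1 !natrD; field.
Qed.

Lemma low_family_balanced l h : (h <= l)%N ->
  balanced l (2 * (l.+1 + h)%:R * (l - h)%:R) (low_family l h).
Proof.
move=> hl c; rewrite big_cat big_flatten /= big_map [X in _ + X]big_map.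
have triples x : (1 <= x < h.+1)%N ->
    \sum_(t <- [seq (triple_weight l h x, x :: J) | J <- pair_block l (h.+1 - x)])
      t.1 * \sum_(i <- t.2) c i
  = 2 * (c x * psum (triple_weight l h) (h - x)) + 2 * pair_weight l h * c x
    + 2 * psum c l * triple_weight l h x - 2 * (triple_weight l h x * psum c (h - x)).
  move=> /andP[x1 xh]; rewrite big_map /=.
  under eq_bigr => J _ do rewrite big_cons mulrDr.
  rewrite big_split /= -mulr_sumr {1}/pair_block big_map sumr_const_nat -mulr_sumr.
  rewrite sum_pair_block; last by lia.
  have -> : (l.+1 - (h.+1 - x))%N = (l - h + x)%N by lia.
  have -> : (h.+1 - x).-1 = (h - x)%N by lia.
  rewrite -[c x *+ _]mulr_natl mulrA triple_weight_mulE //; [ring | lia].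
rewrite (eq_big_nat _ _ triples) !big_split /= sumrN.
rewrite -[\sum_(1 <= i < h.+1) 2 * (c i * _)]mulr_sumr.
rewrite -[\sum_(1 <= i < h.+1) 2 * (triple_weight l h i * _)]mulr_sumr.
rewrite -[\sum_(1 <= i < h.+1) 2 * pair_weight l h * c i]mulr_sumr.
rewrite -[\sum_(1 <= i < h.+1) 2 * psum c l * triple_weight l h i]mulr_sumr.
rewrite psum_convC -/(psum c h) -/(psum (triple_weight l h) h) -mulr_sumr.
rewrite sum_pair_block; last by lia.
have -> : psum (triple_weight l h) h = (l.+1 + h)%:R * (l - h)%:R - pair_weight l h.
  by rewrite -psum_triple_weight // addrK.
ring.
Qed.

Definition mirror l I := [seq (l.+1 - i)%N | i <- I].

Lemma balanced_mirror l K s :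
  balanced l K s -> balanced l K [seq (t.1, mirror l t.2) | t <- s].
Proof.
move=> bal c; rewrite big_map /=.
under eq_bigr => t _ do rewrite big_map.
by rewrite (bal (fun i => c (l.+1 - i)%N)) psum_rev.
Qed.

Lemma exists_weighted_le0 (T : eqType) (s : seq T) (w f : T -> R) :
  (forall t, t \in s -> 0 <= w t) -> has (fun t => 0 < w t) s ->
  \sum_(t <- s) w t * f t <= 0 -> exists2 t, t \in s & 0 < w t /\ f t <= 0.
Proof.
move=> w_ge0 /hasP[t0 t0s wt0] sum_le0.
have [/hasP[t ts /andP[wt ft]]|/hasPn f_gt0] :=
  boolP (has (fun t => (0 < w t) && (f t <= 0)) s); first by exists t.
have term_gt0 t : t \in s -> 0 < w t -> 0 < w t * f t.
  by move=> ts wt; rewrite mulr_gt0 // ltNge; have := f_gt0 t ts; rewrite wt.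
have rest_ge0 : 0 <= \sum_(t <- rem t0 s) w t * f t.
  rewrite big_seq; apply: sumr_ge0 => t /mem_rem ts.
  by case: (ltrgtP 0 (w t)) (w_ge0 t ts) => [/(term_gt0 t ts)/ltW|//|<-]; rewrite ?mul0r.
have := term_gt0 t0 t0s wt0; move: sum_le0; rewrite (big_rem t0) //=; lra.
Qed.

(* [sharp c l M I]: [I] is an [(l, M / (l (l+1)))]-set whose element sum is
   exactly [M / 2]; here [c i] plays the role of [beta_(n-l+i)]. *)
Definition sharp c l M I : Prop :=
  [/\ lset l I, (sumn I).*2 = M
    & (l * l.+1)%:R * \sum_(i <- I) c i <= M%:R * psum c l].

Lemma balanced_sharp c l K s : (0 < l)%N -> 0 < K -> balanced l K s ->
  (forall t, t \in s -> 0 <= t.1 /\ lset l t.2) ->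
  exists2 t, t \in s & 0 < t.1 /\ sharp c l (sumn t.2).*2 t.2.
Proof.
move=> l_gt0 K_gt0 bal s_ok.
have pos_weight : has (fun t => 0 < t.1) s.
  apply/negPn/negP => /hasPn w_le0.
  have := bal (fun _ => 1); rewrite big1_seq => [|t /andP[_ ts]]; last first.
    by have [w_ge0 _] := s_ok t ts; rewrite (@le_anti _ _ t.1 0) ?w_ge0 ?mul0r // leNgt w_le0.
  rewrite /psum sumr_const_nat subn1 /= => /esym/eqP; rewrite mulf_eq0 pnatr_eq0.
  by rewrite gt_eqF //=; lia.
have sum_id : \sum_(t <- s) t.1 * (sumn t.2)%:R = K * ((l * l.+1)%:R / 2).
  under eq_bigr => t _ do rewrite sumnE natr_sum.
  rewrite (bal (fun i => i%:R)) (psum_affine (u := 0) (v := 1)) => [|x]; last by ring.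
  by rewrite natrM -natr1; field.
pose f (t : R * seq nat) := (l * l.+1)%:R * \sum_(i <- t.2) c i - ((sumn t.2).*2)%:R * psum c l.
have sum_f : \sum_(t <- s) t.1 * f t <= 0.
  rewrite (eq_bigr (fun t => (l * l.+1)%:R * (t.1 * \sum_(i <- t.2) c i)
                             - 2 * psum c l * (t.1 * (sumn t.2)%:R))); last first.
    by move=> t _; rewrite /f -muln2 natrM; ring.
  by rewrite sumrB -!mulr_sumr bal sum_id [X in X <= 0](_ : _ = 0) //; field.
have [t ts [wt ft]] := exists_weighted_le0 (fun t ts => (s_ok t ts).1) pos_weight sum_f.
exists t => //; split => //; split => //; first by have [] := s_ok t ts.
by rewrite -subr_le0.
Qed.

Definition rep d I := flatten (nseq d I).

Lemma size_rep d I : size (rep d I) = (d * size I)%N.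
Proof. by elim: d => [|d IH] //=; rewrite size_cat IH mulSn. Qed.

Lemma sumn_rep d I : sumn (rep d I) = (d * sumn I)%N.
Proof. by elim: d => [|d IH] //=; rewrite sumn_cat IH mulSn. Qed.

Lemma sum_rep c d I : \sum_(i <- rep d I) c i = d%:R * \sum_(i <- I) c i.
Proof.
elim: d => [|d IH]; first by rewrite big_nil mul0r.
by rewrite big_cat /= IH -natr1; ring.
Qed.

Lemma lset_rep l d I : lset l I -> lset l (rep d I).
Proof. by move=> lI; elim: d => [|d IH] //=; rewrite /lset all_cat; apply/andP. Qed.

Lemma sharp_cat c l M1 M2 I1 I2 :
  sharp c l M1 I1 -> sharp c l M2 I2 -> sharp c l (M1 + M2) (I1 ++ I2).
Proof.
move=> [l1 s1 b1] [l2 s2 b2]; split.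
- by rewrite /lset all_cat; apply/andP.
- by rewrite sumn_cat doubleD s1 s2.
- by rewrite big_cat mulrDr natrD mulrDl lerD.
Qed.

Lemma sharp_rep c l M d I : sharp c l M I -> sharp c l (d * M) (rep d I).
Proof.
move=> [lI sI bI]; split; first exact: lset_rep.
  by rewrite sumn_rep -muln2 -mulnA muln2 sI.
by rewrite sum_rep [(d * M)%:R]natrM mulrCA -mulrA; apply: ler_wpM2l.
Qed.

Lemma sharp_iota c l : sharp c l (l * l.+1) (iota 1 l).
Proof.
split; first by apply/allP => i; rewrite mem_iota; lia.
  by elim: l => [|l IH] //; rewrite -[l.+1]addn1 iotaD sumn_cat doubleD IH /=; lia.
by rewrite /psum /index_iota subSS subn0.
Qed.

Lemma low_familyP l h t : t \in low_family l h ->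
  (exists x i, [/\ t = (triple_weight l h x, [:: x; i; (l + (h.+1 - x) - i)%N]),
                   (1 <= x <= h)%N & (h.+1 - x <= i <= l)%N])
  \/ exists2 i, t = (pair_weight l h, [:: i; (l + h.+1 - i)%N]) & (h < i <= l)%N.
Proof.
rewrite mem_cat => /orP[/flattenP[u /mapP[x x_in ->] /mapP[J /mapP[i i_in ->] ->]]|].
  by left; exists x, i; move: x_in i_in; rewrite !mem_index_iota; split => //; lia.
move=> /mapP[J /mapP[i i_in ->] ->]; right; exists i => //.
by move: i_in; rewrite mem_index_iota; lia.
Qed.

Lemma pair_weightE l h : (2 * h <= l.+1)%N -> pair_weight l h = (l * (l.+1 - 2 * h))%:R.
Proof. by move=> h_le; rewrite natrM natrB // natrM -natr1. Qed.

Lemma low_family_ge0_lset l h t : (2 * h <= l.+1)%N -> t \in low_family l h ->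
  0 <= t.1 /\ lset l t.2.
Proof.
move=> h_le /low_familyP[[x [i [-> x_in i_in]]]|[i -> i_in]] /=.
  split; last by rewrite /lset /=; lia.
  by rewrite /triple_weight pmulr_rge0 // subr_ge0 -natrM ler_nat; lia.
by split; [rewrite pair_weightE | rewrite /lset /=; lia].
Qed.

Lemma sharp_low c l h : (2 * h <= l.+1)%N -> (h < l)%N ->
  (exists2 I, sharp c l (2 * (l.+1 + h)) I
    & ((size I == 2) && (2 * h < l.+1)) || ((size I == 3) && (0 < h)))%N.
Proof.
move=> h_le hl.
have K_gt0 : 0 < 2 * (l.+1 + h)%:R * (l - h)%:R :> R.
  by rewrite -natrM -natrM ltr0n; lia.
have [t /low_familyP[[x [i [-> x_in i_in]]]|[i -> i_in]] [/= w_gt0 I_sharp]] :=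
  balanced_sharp c (leq_ltn_trans (leq0n h) hl) K_gt0
    (low_family_balanced (ltnW hl)) (fun t => low_family_ge0_lset h_le).
  exists [:: x; i; (l + (h.+1 - x) - i)%N]; last by apply/orP; right; rewrite /=; lia.
  by move: I_sharp; rewrite /=; congr (sharp _ _ _ _); lia.
exists [:: i; (l + h.+1 - i)%N]; last first.
  by move: w_gt0; rewrite pair_weightE // ltr0n muln_gt0 /=; lia.
by move: I_sharp; rewrite /=; congr (sharp _ _ _ _); lia.
Qed.

Lemma sharp_pair c l : (0 < l)%N -> exists2 p, sharp c l (2 * l.+1) p & size p = 2%N.
Proof.
move=> l_gt0; have [p] := sharp_low c (leq0n l.+1 : 2 * 0 <= l.+1)%N l_gt0.
by rewrite addn0 andbF orbF => p_sharp /andP[/eqP p_size _]; exists p.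
Qed.

Lemma sharp_high c l h : (2 * h <= l.+1)%N -> (h < l)%N ->
  (exists2 I, sharp c l (2 * (2 * l.+1 - h)) I
    & ((size I == 3) && (0 < h)) || ((size I == 4) && (2 * h < l.+1)))%N.
Proof.
move=> h_le hl; have l_gt0 : (0 < l)%N by lia.
have [p p_sharp p_size] := sharp_pair c l_gt0.
have K_gt0 : 0 < 2 * (l.+1 + h)%:R * (l - h)%:R :> R.
  by rewrite -natrM -natrM ltr0n; lia.
have mirror_ok t : t \in [seq (u.1, mirror l u.2) | u <- low_family l h] ->
    0 <= t.1 /\ lset l t.2.
  move=> /mapP[u u_in ->]; split; first by have [] := low_family_ge0_lset h_le u_in.
  by case/low_familyP: u_in => [[x [i [-> x_in i_in]]]|[i -> i_in]]; rewrite /lset /=; lia.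
have [t /mapP[u /low_familyP[[x [i [-> x_in i_in]]]|[i -> i_in]] ->] [/= w_gt0 I_sharp]] :=
  balanced_sharp c l_gt0 K_gt0 (balanced_mirror (low_family_balanced (ltnW hl))) mirror_ok.
  exists (mirror l [:: x; i; (l + (h.+1 - x) - i)%N]); last by apply/orP; left; rewrite /=; lia.
  by move: I_sharp; rewrite /=; congr (sharp _ _ _ _); lia.
exists (mirror l [:: i; (l + h.+1 - i)%N] ++ p).
  have -> : (2 * (2 * l.+1 - h) = (sumn (mirror l [:: i; l + h.+1 - i])).*2 + 2 * l.+1)%N.
    by rewrite /=; lia.
  exact: sharp_cat.
by move: w_gt0; rewrite size_cat p_size pair_weightE // ltr0n muln_gt0 /=; lia.
Qed.

Lemma div_bounds a b d k : (0 < d)%N -> (a < k.+1 * d)%N -> (k * d <= b)%N ->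
  (2 + a %/ d <= k.+2 <= 2 + b %/ d)%N.
Proof.
move=> d_gt0 a_lt b_ge; rewrite -[k.+2]/(2 + k)%N !leq_add2l.
by rewrite -ltnS ltn_divLR // leq_divRL // a_lt.
Qed.

Lemma sharp_mid c l m : (0 < l)%N -> (m <= l.+1)%N ->
  (exists2 I, sharp c l (2 * (l.+1 + m)) I
    & 2 + (2 * m) %/ l.+1 <= size I <= 2 + (2 * m + l) %/ l.+1)%N.
Proof.
move=> l_gt0 m_le; have [->|l_neq1] := eqVneq l 1%N.
  exists (rep (2 + m) (iota 1 1)); last by rewrite size_rep /=; lia.
  by have := sharp_rep (2 + m) (sharp_iota c 1); congr (sharp _ _ _ _); lia.
have [m_half|m_half] := leqP (2 * m) l.+1.
  have m_lt : (m < l)%N by lia.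
  have [I I_sharp I_size] := sharp_low c m_half m_lt; exists I => //.
  by case/orP: I_size => /andP[/eqP -> ?]; apply: div_bounds; lia.
have h_half : (2 * (l.+1 - m) <= l.+1)%N by lia.
have h_lt : (l.+1 - m < l)%N by lia.
have [I I_sharp I_size] := sharp_high c h_half h_lt; exists I.
  by move: I_sharp; congr (sharp _ _ _ _); lia.
by case/orP: I_size => /andP[/eqP -> ?]; apply: div_bounds; lia.
Qed.

Lemma sharp_nil c l : sharp c l 0 [::].
Proof. by split => //; rewrite big_nil mulr0 mul0r. Qed.

Lemma sharp_pairs_cat c l k M J : (0 < l)%N -> sharp c l M J ->
  exists2 I, sharp c l (k * (2 * l.+1) + M) I & size I = (2 * k + size J)%N.
Proof.
move=> l_gt0 J_sharp; have [p p_sharp p_size] := sharp_pair c l_gt0.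
exists (rep k p ++ J); first exact: sharp_cat (sharp_rep k p_sharp) J_sharp.
by rewrite size_cat size_rep p_size mulnC.
Qed.

Lemma even_or_odd l : exists j, l = j.*2 \/ l = j.*2.+1.
Proof.
exists l./2; case: (odd l) (odd_double_half l) => /= l_eq; [right|left].
  by rewrite -{1}l_eq.
by rewrite -{1}l_eq add0n.
Qed.

Lemma sharp_below c l h : (0 < l)%N -> (2 * h <= l.+1)%N ->
  exists2 I, sharp c l (l * l.+1 - 2 * h) I & (l - 1 <= size I <= l)%N.
Proof.
move=> l_gt0 h_le; have [->|h_gt0] := posnP h.
  exists (iota 1 l); first by rewrite muln0 subn0; exact: sharp_iota.
  by rewrite size_iota; lia.
have [l_le2|l_gt2] := leqP l 2.
  have [->|->] : l = 1%N \/ l = 2%N by lia.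
    have -> : h = 1%N by lia.
    by exists [::]; first exact: sharp_nil.
  have -> : h = 1%N by lia.
  have psum2 : psum c 2 = c 1%N + c 2%N by rewrite /psum /index_iota /= !big_cons big_nil addr0.
  rewrite (_ : (2 * 3 - 2 * 1)%N = 4%N) //.
  have [c_le|c_gt] := lerP (c 2%N) (2 * c 1%N).
    exists [:: 2%N] => //; split => //.
    by rewrite psum2 !big_cons big_nil; lra.
  exists [:: 1%N; 1%N] => //; split => //.
  by rewrite psum2 !big_cons big_nil; lra.
have [j [l_eq|l_eq]] := even_or_odd l.
  have m_le : (l.+1 - h <= l.+1)%N by lia.
  have [J J_sharp /andP[J_lo J_hi]] := sharp_mid c l_gt0 m_le.
  have [I I_sharp I_size] := sharp_pairs_cat (j - 2) l_gt0 J_sharp.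
  exists I; first by move: I_sharp; congr (sharp _ _ _ _); subst l; nia.
  have lo : (1 <= (2 * (l.+1 - h)) %/ l.+1)%N by rewrite leq_divRL; lia.
  have hi : ((2 * (l.+1 - h) + l) %/ l.+1 < 3)%N by rewrite ltn_divLR; lia.
  by move: J_lo J_hi lo hi; rewrite I_size; subst l; lia.
have m_le : (j.+1 - h <= l.+1)%N by lia.
have [J J_sharp /andP[J_lo J_hi]] := sharp_mid c l_gt0 m_le.
have [I I_sharp I_size] := sharp_pairs_cat (j - 1) l_gt0 J_sharp.
exists I; first by move: I_sharp; congr (sharp _ _ _ _); subst l; nia.
have lo : (0 <= (2 * (j.+1 - h)) %/ l.+1)%N by [].
have hi : ((2 * (j.+1 - h) + l) %/ l.+1 < 2)%N by rewrite ltn_divLR; lia.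
by move: J_lo J_hi hi; rewrite I_size; subst l; lia.
Qed.

Lemma sharp_full_add c l h : (0 < l)%N -> (h <= l)%N ->
  (exists2 I, sharp c l (l * l.+1 + 2 * h) I
    & l + (2 * h) %/ l.+1 <= size I <= l + (2 * h + l) %/ l.+1)%N.
Proof.
move=> l_gt0 hl; have [->|l_neq1] := eqVneq l 1%N.
  exists (rep (1 + h) (iota 1 1)); last by rewrite size_rep /=; lia.
  by have := sharp_rep (1 + h) (sharp_iota c 1); congr (sharp _ _ _ _); lia.
have [h_half|h_half] := leqP (2 * h) l.+1; last first.
  have h'_half : (2 * (l.+1 - h) <= l.+1)%N by lia.
  have [J J_sharp J_size] := sharp_below c l_gt0 h'_half.
  have [I I_sharp I_size] := sharp_pairs_cat 1 l_gt0 J_sharp.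
  exists I; first by move: I_sharp; congr (sharp _ _ _ _); nia.
  have lo : ((2 * h) %/ l.+1 < 2)%N by rewrite ltn_divLR; lia.
  have hi : (2 <= (2 * h + l) %/ l.+1)%N by rewrite leq_divRL; lia.
  by move: J_size lo hi; rewrite I_size; lia.
have [j [l_eq|l_eq]] := even_or_odd l.
  have h_le : (h <= l.+1)%N by lia.
  have [J J_sharp J_size] := sharp_mid c l_gt0 h_le.
  have [I I_sharp I_size] := sharp_pairs_cat (j - 1) l_gt0 J_sharp.
  exists I; first by move: I_sharp; congr (sharp _ _ _ _); subst l; nia.
  by move: J_size; rewrite I_size; subst l; lia.
have m_le : (j.+1 + h <= l.+1)%N by lia.
have [J J_sharp J_size] := sharp_mid c l_gt0 m_le.
have [I I_sharp I_size] := sharp_pairs_cat (j - 1) l_gt0 J_sharp.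
exists I; first by move: I_sharp; congr (sharp _ _ _ _); subst l; nia.
have shift b : ((2 * (j.+1 + h) + b) %/ l.+1 = 1 + (2 * h + b) %/ l.+1)%N.
  by rewrite (_ : 2 * (j.+1 + h) + b = l.+1 + (2 * h + b))%N ?(divnDl _ (dvdnn l.+1)) ?divnn; lia.
by move: J_size; rewrite shift -[(2 * (j.+1 + h))%N]addn0 shift addn0 I_size; subst l; lia.
Qed.

Lemma sharp_above c l k h : (0 < l)%N -> (h <= l)%N ->
  (exists2 I, sharp c l (k.+1 * (l * l.+1) + 2 * h) I
    & k.+1 * l + (2 * h) %/ l.+1 <= size I <= k.+1 * l + (2 * h + l) %/ l.+1)%N.
Proof.
move=> l_gt0 hl; have [J J_sharp J_size] := sharp_full_add c l_gt0 hl.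
exists (rep k (iota 1 l) ++ J).
  by rewrite mulSnr -addnA; apply: sharp_cat (sharp_rep k (sharp_iota c l)) J_sharp.
by move: J_size; rewrite size_cat size_rep size_iota mulSnr; lia.
Qed.

Lemma sharp_pairs_mid c l d h : (0 < l)%N -> (h <= l)%N ->
  (exists2 I, sharp c l (d.+1 * (2 * l.+1) + 2 * h) I & size I <= 2 * d + 4)%N.
Proof.
move=> l_gt0 hl; have h_le : (h <= l.+1)%N by lia.
have [J J_sharp /andP[_ J_hi]] := sharp_mid c l_gt0 h_le.
have [I I_sharp I_size] := sharp_pairs_cat d l_gt0 J_sharp.
exists I; first by move: I_sharp; congr (sharp _ _ _ _); lia.
have hi : ((2 * h + l) %/ l.+1 < 3)%N by rewrite ltn_divLR; lia.
by rewrite I_size; lia.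
Qed.

End SharpSets.

Lemma sharp_lqset (R : realFieldType) (beta : nat -> R) n l M I (q : R) : (0 < l)%N ->
  sharp (fun i => betaz beta (n - l + i)) l M I -> q = M%:R / (l * l.+1)%:R ->
  lqset beta n l q I.
Proof.
move=> l_gt0 [lI sI bI] ->.
have L_gt0 : 0 < (l * l.+1)%:R :> R by rewrite ltr0n muln_gt0 l_gt0.
split => //; last by rewrite mulrAC ler_pdivlMr // mulrC.
rewrite addn1 -sI -muln2 natrM [X in X <= _](_ : _ = (sumn I)%:R) //.
have l_neq0 : l%:R != 0 :> R by rewrite pnatr_eq0 -lt0n.
by field; rewrite l_neq0 addrC natr1 pnatr_eq0.
Qed.

(* A sharp pair for [l+1], shifted down by one, is an [l]-set whose [sigma]
   involves the same values of [beta]. *)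
Lemma sigmaI_shifted_pairs (R : realFieldType) (beta : nat -> R) n l d : (l < n)%N ->
  exists I, [/\ lset l I, size I = (2 * d)%N, (l * d <= sumn I)%N
      & sigmaI beta n l I <= (2 * d)%:R * tsum beta n l.+1 / (l + 1)%:R].
Proof.
move=> ln; pose c j := betaz beta (n - l.+1 + j).
have [[|a [|b []]] //= [J_l J_sum J_bd] _] := sharp_pair c (ltn0Sn l).
move: J_l J_sum; rewrite /lset /= => J_l J_sum.
have a_b : (a + b = l.+2)%N by lia.
exists (rep d [:: a.-1; b.-1]); split.
- by apply: lset_rep; rewrite /lset /=; lia.
- by rewrite size_rep mulnC.
- by rewrite sumn_rep /= (_ : a.-1 + (b.-1 + 0) = l)%N //; lia.
have pair_bd : c a + c b <= 2 * psum c l.+1 / l.+1%:R.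
  rewrite ler_pdivlMr ?ltr0n // -(ler_pM2l (_ : 0 < l.+2%:R :> R)) ?ltr0n //.
  by move: J_bd; rewrite !big_cons big_nil addr0 !natrM; lra.
rewrite /sigmaI sum_rep !big_cons big_nil addr0.
have shift x : (0 < x)%N -> betaz beta (n - l + x.-1) = c x.
  by move=> x_gt0; rewrite /c; congr betaz; lia.
rewrite !shift; try lia.
rewrite (_ : (2 * d)%:R * _ / _ = d%:R * (2 * psum c l.+1 / l.+1%:R)); last first.
  by change (tsum beta n l.+1) with (psum c l.+1); rewrite addn1 natrM; ring.
by apply: ler_wpM2l.
Qed.

Theorem lemma3 (R : realFieldType) (beta : nat -> R) (n l : nat)
  (hb1 : 0 <= beta 1%N)
  (hmono : forall i : nat, (1 <= i)%N -> (i < n)%N -> beta i <= beta i.+1)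
  (hl1 : (1 <= l)%N) (hln : (l <= n)%N) :
  [/\
   (forall d : nat, exists I : seq nat,
      lqset beta n l ((2 * d)%:R / l%:R) I /\ size I = (2 * d)%N),
   (forall h : nat, (2 * h <= l + 1)%N -> exists I : seq nat,
      lqset beta n l (1 - (2 * h)%:R / (l * (l + 1))%:R) I
      /\ (l - 1 <= size I <= l)%N),
   (forall k h : nat, (1 <= k)%N -> (h <= l)%N -> exists I : seq nat,
      lqset beta n l (k%:R + (2 * h)%:R / (l * (l + 1))%:R) I
      /\ (k * l + (2 * h) %/ (l + 1) <= size I
           <= k * l + (2 * h + l) %/ (l + 1))%N),
   (forall d h : nat, (1 <= d)%N -> (h <= l)%N -> exists I : seq nat,
      lqset beta n l ((2 * d)%:R / l%:R + (2 * h)%:R / (l * (l + 1))%:R) I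
      /\ (size I <= 2 * d + 2)%N)
  &
   ((l <= n - 1)%N -> forall d : nat, exists I : seq nat,
      [/\ lset l I, size I = (2 * d)%N, (l * d <= sumn I)%N
        & sigmaI beta n l I
            <= (2 * d)%:R * tsum beta n l.+1 / (l + 1)%:R])].
Proof.
pose c i := betaz beta (n - l + i).
have l_neq0 : l%:R != 0 :> R by rewrite pnatr_eq0 -lt0n.
have l1_neq0 : 1 + l%:R != 0 :> R by rewrite addrC natr1 pnatr_eq0.
split.
- move=> d; have [I I_sharp I_size] := sharp_pairs_cat d hl1 (sharp_nil c l).
  exists I; split; last by rewrite I_size addn0.
  by apply: sharp_lqset hl1 I_sharp _; rewrite addn0 !natrM; field; rewrite l_neq0 l1_neq0.
- move=> h; rewrite addn1 => h_le; have [I I_sharp I_size] := sharp_below c hl1 h_le.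
  exists I; split => //; apply: sharp_lqset hl1 I_sharp _.
  rewrite natrB; last by nia.
  by rewrite !natrM; field; rewrite l_neq0 l1_neq0.
- move=> [//|k] h _ hl; have [I I_sharp I_size] := sharp_above c k hl1 hl.
  exists I; rewrite !addn1; split => //; apply: sharp_lqset hl1 I_sharp _.
  by rewrite natrD !natrM; field; rewrite l_neq0 l1_neq0.
- move=> [//|d] h _ hl; have [I I_sharp I_size] := sharp_pairs_mid c d hl1 hl.
  exists I; split; last by lia.
  by apply: sharp_lqset hl1 I_sharp _; rewrite addn1 natrD !natrM; field; rewrite l_neq0 l1_neq0.
- by move=> ln d; apply: sigmaI_shifted_pairs; lia.
Qed.
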